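(* Let $R$ be a commutative elementary divisor domain, let $E,\Phi$ be $n\times n$ $d$-matrices, and let $A=P_A^{-1}EQ_A^{-1}$ with $P_A,Q_A\in GL_n(R)$. Every $n\times n$ matrix with Smith form $\Phi$ (i.e. equivalent to $\Phi$) is a left divisor of $A$ if and only if $\Phi\mid E$ and $\mathbf L(E,\Phi)=GL_n(R)$.
   Context: Elementary divisor domain: commutative integral domain over which every matrix is equivalent ($PAQ$, $P,Q$ invertible) to a $d$-matrix (diagonal $\mathrm{diag}(\varphi_1,\dots)$ with $\varphi_i\mid\varphi_{i+1}$). For $E=\mathrm{diag}(\varepsilon_1,\dots,\varepsilon_k,0,\dots,0)$, $\Phi=\mathrm{diag}(\varphi_1,\dots,\varphi_t,0,\dots,0)$ with $\varepsilon_k,\varphi_t\ne0$, $\Phi\mid E$ means $k\le t$ and $\varphi_i\mid\varepsilon_i$ for $i\le k$. $\mathbf L(E,\Phi)=\{L\in GL_n(R):\exists S\in M_n(R),\ LE=\Phi S\}$. $B$ is a left divisor of $A$ if $A=BC$ for some matrix $C$. *)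

From mathcomp Require Import all_boot all_algebra.
Set Implicit Arguments. Unset Strict Implicit. Unset Printing Implicit Defensive.
Import GRing.Theory.
Local Open Scope ring_scope.

Definition rdvd (R : comRingType) (a b : R) : Prop := exists c : R, b = a * c.

(* d-matrix: diagonal matrix diag(phi_1, phi_2, ...) with phi_i | phi_(i+1). *)
Definition is_dmx (R : comRingType) (m n : nat) (D : 'M[R]_(m, n)) : Prop :=
  (forall (i : 'I_m) (j : 'I_n), (i : nat) <> (j : nat) -> D i j = 0) /\
  (forall (i : 'I_m) (j : 'I_n) (i' : 'I_m) (j' : 'I_n),
      (i : nat) = j -> (i' : nat) = j' -> (i' : nat) = i.+1 ->
      rdvd (D i j) (D i' j')).

Definition elementary_divisor_domain (R : idomainType) : Prop :=
  forall (m n : nat) (A : 'M[R]_(m, n)),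
    exists (P : 'M[R]_m) (Q : 'M[R]_n),
      P \in unitmx /\ Q \in unitmx /\ is_dmx (P *m A *m Q).

Definition mx_equiv (R : comUnitRingType) (n : nat) (B A : 'M[R]_n) : Prop :=
  exists P Q : 'M[R]_n, P \in unitmx /\ Q \in unitmx /\ B = P *m A *m Q.

Definition left_divisor (R : ringType) (n : nat) (B A : 'M[R]_n) : Prop :=
  exists C : 'M[R]_n, A = B *m C.

Definition nz_diag (R : ringType) (n : nat) (D : 'M[R]_n) : nat :=
  #|[pred i : 'I_n | D i i != 0]|.

(* Phi | E for d-matrices E = diag(eps_1..eps_k,0..), Phi = diag(phi_1..phi_t,0..):
   k <= t and phi_i | eps_i for i <= k. *)
Definition dmx_dvd (R : comRingType) (n : nat) (Phi E : 'M[R]_n) : Prop :=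
  (nz_diag E <= nz_diag Phi)%N /\
  (forall i : 'I_n, (i < nz_diag E)%N -> rdvd (Phi i i) (E i i)).

Definition Lset (R : comUnitRingType) (n : nat) (E Phi : 'M[R]_n) : 'M[R]_n -> Prop :=
  fun L => L \in unitmx /\ exists S : 'M[R]_n, L *m E = Phi *m S.

From mathcomp Require Import all_boot all_algebra.
Set Implicit Arguments. Unset Strict Implicit. Unset Printing Implicit Defensive.
Import GRing.Theory.
Local Open Scope ring_scope.

(* Left divisibility of a fixed matrix is insensitive to unit factors on the
   outer sides, so "every matrix equivalent to Phi left-divides A" only says
   that Phi left-divides L A for every unit L.  For A = PA^-1 E QA^-1 this is
   the same as Phi left-dividing L E for every unit L, i.e. L(E, Phi) = GL_n.
   Taking L = 1 gives E = Phi S, and comparing diagonals of the diagonal Phi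
   with E yields Phi | E. *)

Section LeftDivisorUnits.

Variables (R : comUnitRingType) (n : nat).
Implicit Types (A B L P Q : 'M[R]_n).

Lemma left_divisorMr_unit B A Q :
  Q \in unitmx -> left_divisor (B *m Q) A <-> left_divisor B A.
Proof.
move=> Qu; split=> [[C ->] | [C ->]]; first by exists (Q *m C); rewrite mulmxA.
by exists (invmx Q *m C); rewrite mulmxA mulmxK.
Qed.

Lemma left_divisorMl_unit P B A :
  P \in unitmx -> left_divisor (P *m B) A <-> left_divisor B (invmx P *m A).
Proof.
move=> Pu; split=> [[C ->] | [C AE]]; first by exists C; rewrite -mulmxA mulKmx.
by exists C; rewrite -mulmxA -AE mulKVmx.
Qed.

Lemma left_divisor_dividendMr_unit B A Q :
  Q \in unitmx -> left_divisor B (A *m Q) <-> left_divisor B A.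
Proof.
move=> Qu; split=> [[C AQE] | [C ->]]; last by exists (C *m Q); rewrite mulmxA.
by exists (C *m invmx Q); rewrite mulmxA -AQE mulmxK.
Qed.

Lemma equiv_left_divisorsP Phi A :
  (forall B, mx_equiv B Phi -> left_divisor B A) <->
  (forall L, L \in unitmx -> left_divisor Phi (L *m A)).
Proof.
split=> [divA L Lu | divLA B [P [Q [Pu [Qu ->]]]]].
  have L'u : invmx L \in unitmx by rewrite unitmx_inv.
  rewrite -[L]invmxK; apply/(left_divisorMl_unit _ _ L'u)/divA.
  exists (invmx L), 1%:M.
  by rewrite unitmx_inv unitmx1 mulmx1.
apply/(left_divisorMr_unit _ _ Qu)/(left_divisorMl_unit _ _ Pu).
by apply: divLA; rewrite unitmx_inv.
Qed.

Lemma unit_translates_left_divisor Phi E PA QA :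
  PA \in unitmx -> QA \in unitmx ->
  (forall L, L \in unitmx -> left_divisor Phi (L *m (invmx PA *m E *m invmx QA))) <->
  (forall L, L \in unitmx -> left_divisor Phi (L *m E)).
Proof.
move=> PAu QAu; have QA'u : invmx QA \in unitmx by rewrite unitmx_inv.
split=> [divLA L Lu | divLE L Lu].
  have /divLA : L *m PA \in unitmx by rewrite unitmx_mul Lu PAu.
  by rewrite !mulmxA mulmxK // => /(left_divisor_dividendMr_unit _ _ QA'u).
rewrite !mulmxA; apply/(left_divisor_dividendMr_unit _ _ QA'u)/divLE.
by rewrite unitmx_mul Lu unitmx_inv.
Qed.

Lemma Lset_fullP E Phi :
  (forall L, Lset E Phi L <-> L \in unitmx) <->
  (forall L, L \in unitmx -> left_divisor Phi (L *m E)).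
Proof.
split=> [fullL L Lu | divLE L]; first by have [_ [S]] := (proj2 (fullL L)) Lu; exists S.
by split=> [[] // | Lu]; split=> //; have [S] := divLE L Lu; exists S.
Qed.

End LeftDivisorUnits.

Lemma dmx_dvd_left_divisor (R : comRingType) (n : nat) (Phi E : 'M[R]_n) :
  is_diag_mx Phi -> left_divisor Phi E -> dmx_dvd Phi E.
Proof.
move=> /is_diag_mxP Phi_diag [S ->].
have diagE i : (Phi *m S) i i = Phi i i * S i i.
  rewrite mxE (bigD1 i) //= big1 ?addr0 // => k ki.
  by rewrite Phi_diag ?mul0r // eq_sym.
split=> [|i _]; last by exists (S i i); rewrite diagE.
apply/subset_leq_card/subsetP => i; rewrite !inE diagE.
by apply: contraNneq => ->; rewrite mul0r.
Qed.

Theorem theorem5p3 (R : idomainType) (HR : elementary_divisor_domain R)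
  (n : nat) (E Phi PA QA : 'M[R]_n)
  (hE : is_dmx E) (hPhi : is_dmx Phi)
  (hPA : PA \in unitmx) (hQA : QA \in unitmx) :
  let A := invmx PA *m E *m invmx QA in
  (forall B : 'M[R]_n, mx_equiv B Phi -> left_divisor B A) <->
  (dmx_dvd Phi E /\ (forall L : 'M[R]_n, Lset E Phi L <-> L \in unitmx)).
Proof.
move=> A; have Phi_diag : is_diag_mx Phi.
  by apply/is_diag_mxP => i j /eqP; apply: hPhi.1.
apply: iff_trans (equiv_left_divisorsP _ _) _.
apply: iff_trans (unit_translates_left_divisor _ _ hPA hQA) _.
apply: iff_trans _ (and_iff_compat_l _ (iff_sym (Lset_fullP _ _))).
split=> [divLE | [] //]; split=> //.
by apply: dmx_dvd_left_divisor Phi_diag _; rewrite -[E]mul1mx; apply/divLE/unitmx1.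
Qed.
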